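(* Let $V$ be a finite nonempty set, $U\subseteq V$, $\hat x$ a maximally specific partial function on $P_V$, $\hat x'=\hat x|_{P_U}$, $y\in X_U[\hat x']$, and $\tau\in\{\tau^y_{\mathrm{out}},\tau^y_{\mathrm{in}},\tau^y_{\mathrm{bd}}\}$, with the corresponding sets $P'_{01},P''_{01},P'_{10},P''_{10}$ given in the context. If $P'_{10}\cap\hat x^{-1}(1)=P'_{01}\cap\hat x^{-1}(0)=\emptyset$, or if $P''_{10}\cap\hat x^{-1}(1)=P''_{01}\cap\hat x^{-1}(0)=\emptyset$, then $\tau(X_V[\hat x])\subseteq X_V[\hat x]$.
   Context: For a finite set $W$, $P_W=\{pq\in W^2\mid p\neq q\}$ and $X_W$ is the set of $x\in\{0,1\}^{P_W}$ with $x_{pq}+x_{qr}-x_{pr}\le1$ for all pairwise distinct $p,q,r\in W$. A partial function $\tilde x$ on $P_W$ is a map from $\operatorname{dom}(\tilde x)\subseteq P_W$ to $\{0,1\}$, $\tilde x^{-1}(b)$ the pairs mapped to $b$, $X_W[\tilde x]=\{x\in X_W\mid x_{pq}=\tilde x_{pq}\ \forall pq\in\operatorname{dom}(\tilde x)\}$; convention $\tilde x_{aa}=1$, $x_{aa}=1$, $y_{aa}=1$ for all $a$. A pair is decided if it has the same value in all completions; $\tilde x$ is maximally specific if $X_W[\tilde x]\ne\emptyset$ and the decided pairs are exactly $\operatorname{dom}(\tilde x)$. $\hat x|_{P_U}$ has domain $\operatorname{dom}(\hat x)\cap P_U$. $\delta(U)=(U\times(V\setminus U))\cup((V\setminus U)\times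 U)$. For $x\in X_V[\hat x]$: $\tau^y_{\mathrm{out}}(x)_{pq}$ equals $y_{pq}$ on $P_U$; $0$ on $U\times(V\setminus U)$; on $(V\setminus U)\times U$, $1$ if $\exists r\in U: x_{pr}=1\wedge y_{rq}=1$ and $0$ otherwise; $x_{pq}$ on $P_{V\setminus U}$. $\tau^y_{\mathrm{in}}(x)_{pq}$ equals $y_{pq}$ on $P_U$; $0$ on $(V\setminus U)\times U$; on $U\times(V\setminus U)$, $1$ if $\exists r\in U: y_{pr}=1\wedge x_{rq}=1$ and $0$ otherwise; $x_{pq}$ on $P_{V\setminus U}$. $\tau^y_{\mathrm{bd}}(x)_{pq}$ equals $y_{pq}$ on $P_U$; $0$ on $\delta(U)$; $x_{pq}$ on $P_{V\setminus U}$. Sets: for $\tau^y_{\mathrm{out}}$: $P'_{01}=\{pq\in(V\setminus U)\times U\mid\exists r\in U:\hat x_{pr}\ne0\wedge y_{rq}=1\}\setminus\hat x^{-1}(1)$, $P''_{01}=((V\setminus U)\times U)\setminus\hat x^{-1}(1)$, $P'_{10}=P''_{10}=(U\times(V\setminus U))\setminus\hat x^{-1}(0)$. For $\tau^y_{\mathrm{in}}$: $P'_{01}=\{pq\in U\times(V\setminus U)\mid\exists r\in U: y_{pr}=1\wedge\hat x_{rq}\ne0\}\setminus\hat x^{-1}(1)$, $P''_{01}=(U\times(V\setminus U))\setminus\hat x^{-1}(1)$, $P'_{10}=P''_{10}=((V\setminus U)\times U)\setminus\hat x^{-1}(0)$. For $\tau^y_{\mathrm{bd}}$: $P'_{01}=P''_{01}=\emptyset$,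 $P'_{10}=P''_{10}=\delta(U)\setminus\hat x^{-1}(0)$. *)

From mathcomp Require Import all_boot.
Set Implicit Arguments. Unset Strict Implicit. Unset Printing Implicit Defensive.

(* A 0/1 vector x in {0,1}^{P_W} is represented by a boolean relation
   x : V -> V -> bool on the ambient finite set V; only the values on
   pairs pq with p, q in W and p <> q are meaningful. *)
Definition brel (V : finType) := V -> V -> bool.

(* partial function on P_V: None = not in the domain *)
Definition prel (V : finType) := V -> V -> option bool.

Definition cv (V : finType) (x : brel V) (p q : V) : bool := (p == q) || x p q.

Definition inX (V : finType) (W : {set V}) (x : brel V) : Prop :=
  forall p q r, p \in W -> q \in W -> r \in W ->
    p != q -> q != r -> p != r ->
    (x p q + x q r - x p r <= 1)%N.

Definition inXp (V : finType) (W : {set V}) (xt : prel V) (x : brel V) : Prop :=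
  inX W x /\
  forall p q, p \in W -> q \in W -> p != q ->
    forall b, xt p q = Some b -> x p q = b.

Definition decided (V : finType) (xt : prel V) (p q : V) : Prop :=
  exists b : bool, forall x, inXp [set: V] xt x -> x p q = b.

Definition in_dom (V : finType) (xt : prel V) (p q : V) : Prop :=
  exists b, xt p q = Some b.

Definition maximally_specific (V : finType) (xt : prel V) : Prop :=
  (exists x, inXp [set: V] xt x) /\
  forall p q : V, p != q -> (decided xt p q <-> in_dom xt p q).

Definition restr (V : finType) (U : {set V}) (xt : prel V) : prel V :=
  fun p q => if (p \in U) && (q \in U) then xt p q else None.

Inductive tau_kind := tau_out | tau_in | tau_bd.

Definition tau (V : finType) (k : tau_kind) (U : {set V}) (y x : brel V) : brel V :=
  fun p q =>
  if (p \in U) && (q \in U) then y p q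
  else if (p \in U) && (q \notin U) then
    match k with
    | tau_in => [exists r in U, cv y p r && cv x r q]
    | _ => false
    end
  else if (p \notin U) && (q \in U) then
    match k with
    | tau_out => [exists r in U, cv x p r && cv y r q]
    | _ => false
    end
  else x p q.

Definition preimg (V : finType) (xt : prel V) (b : bool) (p q : V) : bool :=
  (p != q) && (xt p q == Some b).

Definition ne0 (V : finType) (xt : prel V) (p q : V) : bool := xt p q != Some false.

Definition UxC (V : finType) (U : {set V}) (p q : V) : bool := (p \in U) && (q \notin U).
Definition CxU (V : finType) (U : {set V}) (p q : V) : bool := (p \notin U) && (q \in U).

Definition P1_01 (V : finType) (k : tau_kind) (U : {set V}) (xt : prel V) (y : brel V)
  (p q : V) : bool :=
  match k with
  | tau_out => CxU U p q && [exists r in U, ne0 xt p r && cv y r q] && ~~ preimg xt true p q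
  | tau_in  => UxC U p q && [exists r in U, cv y p r && ne0 xt r q] && ~~ preimg xt true p q
  | tau_bd  => false
  end.

Definition P2_01 (V : finType) (k : tau_kind) (U : {set V}) (xt : prel V) (p q : V) : bool :=
  match k with
  | tau_out => CxU U p q && ~~ preimg xt true p q
  | tau_in  => UxC U p q && ~~ preimg xt true p q
  | tau_bd  => false
  end.

(* P'_10 = P''_10 *)
Definition P_10 (V : finType) (k : tau_kind) (U : {set V}) (xt : prel V) (p q : V) : bool :=
  match k with
  | tau_out => UxC U p q && ~~ preimg xt false p q
  | tau_in  => CxU U p q && ~~ preimg xt false p q
  | tau_bd  => (UxC U p q || CxU U p q) && ~~ preimg xt false p q
  end.

Definition disj2 (V : finType) (A B : V -> V -> bool) : Prop :=
  forall p q, ~~ (A p q && B p q).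

(** [tau x] is again transitive: every new value 1 comes from a path through
    [U] along pairs valued 1 in the transitive relations [x] and [y], so two
    consecutive values 1 compose.  It also keeps the values fixed by [xh]:
    inside [U] it is [y], outside [U] it is [x].  On a cross pair [pq], [tau]
    can contradict [xh] only by writing 0 where [xh_pq = 1], which the
    hypothesis on [P'_10] excludes, or by writing 1 through some [r] in [U]
    where [xh_pq = 0]; since the completion [x] is 1 on the connecting pair,
    [xh] does not fix that pair to 0, so [pq] lies in [P'_01].  The condition
    on [P''_01] is stronger because [P'_01] is contained in [P''_01]. *)
From mathcomp Require Import all_boot.

Set Implicit Arguments.
Unset Strict Implicit.
Unset Printing Implicit Defensive.

Lemma subn_add_le1 (a b c : bool) : (a -> b -> c) -> (a + b - c <= 1)%N.
Proof. by case: a; case: b; case: c => // /(_ isT isT). Qed.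

Section Transitivity.

Variables (V : finType) (W : {set V}) (x : brel V).
Hypothesis hx : inX W x.

Lemma inX_trans p q r : p \in W -> q \in W -> r \in W ->
  p != q -> q != r -> p != r -> x p q -> x q r -> x p r.
Proof.
move=> pW qW rW npq nqr npr xpq xqr.
by have := hx pW qW rW npq nqr npr; rewrite xpq xqr; case: (x p r).
Qed.

Lemma cv_trans p q r : p \in W -> q \in W -> r \in W ->
  cv x p q -> cv x q r -> cv x p r.
Proof.
move=> pW qW rW; rewrite /cv.
case: (eqVneq p q) => [<-|npq] //= xpq.
case: (eqVneq q r) => [<-|nqr] //= xqr; first by rewrite xpq orbT.
case: (eqVneq p r) => //= npr.
exact: (inX_trans pW qW rW npq nqr npr xpq xqr).
Qed.

Lemma cv_neq p q : p != q -> cv x p q = x p q.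
Proof. by rewrite /cv => /negbTE ->. Qed.

End Transitivity.

Lemma inX_tau (V : finType) (k : tau_kind) (U : {set V}) (y x : brel V) :
  inX U y -> inX [set: V] x -> inX [set: V] (tau k U y x).
Proof.
move=> hy hx p q r _ _ _ npq nqr npr; apply: subn_add_le1.
have tx := inX_trans hx; have ty := inX_trans hy.
have cx := cv_trans hx; have cy := cv_trans hy; have T := in_setT.
rewrite /tau.
case: (boolP (p \in U)) => hp; case: (boolP (q \in U)) => hq;
case: (boolP (r \in U)) => hr; case: k => //=.
all: try by apply: ty.
all: try by apply: tx; rewrite ?T.
- move=> ypq /existsP [s /andP [sU /andP [yqs xsr]]]; apply/existsP; exists s.
  by rewrite sU xsr andbT (cy _ _ _ hp hq sU) // /cv ypq orbT.
- move=> /existsP [s /andP [sU /andP [xps ysq]]] xqr; apply/existsP; exists s.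
  by rewrite sU xps (cx _ _ _ (T _ _) (T _ _) (T _ _) ysq) // /cv xqr orbT.
- move=> /existsP [s /andP [sU /andP [xps ysq]]] yqr; apply/existsP; exists s.
  by rewrite sU xps (cy _ _ _ sU hq hr ysq) // /cv yqr orbT.
- move=> xpq /existsP [s /andP [sU /andP [xqs ysr]]]; apply/existsP; exists s.
  by rewrite sU ysr andbT (cx _ _ _ (T _ _) (T _ _) (T _ _) _ xqs) // /cv xpq orbT.
Qed.

Lemma completion_val (V : finType) (xh : prel V) (x : brel V) p q b :
  inXp [set: V] xh x -> p != q -> xh p q = Some b -> x p q = b.
Proof. by case=> _ hx npq; apply: hx; rewrite ?in_setT. Qed.

Lemma completion_ne0 (V : finType) (xh : prel V) (x : brel V) p q :
  inXp [set: V] xh x -> p != q -> x p q -> ne0 xh p q.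
Proof.
move=> hx npq xpq; apply/eqP => xh0.
by move: xpq; rewrite (completion_val hx npq xh0).
Qed.

Lemma P1_01_sub_P2_01 (V : finType) (k : tau_kind) (U : {set V}) (xh : prel V)
  (y : brel V) p q : P1_01 k U xh y p q -> P2_01 k U xh p q.
Proof. by case: k => //= /andP [/andP [-> _] ->]. Qed.

Section CrossPairs.

Variables (V : finType) (k : tau_kind) (U : {set V}) (xh : prel V) (y x : brel V).
Hypothesis hx : inXp [set: V] xh x.
Hypothesis disj10 : disj2 (P_10 k U xh) (preimg xh true).
Hypothesis disj01 : disj2 (P1_01 k U xh y) (preimg xh false).

Lemma tau_UxC p q b : p \in U -> q \notin U -> xh p q = Some b ->
  tau k U y x p q = b.
Proof.
move=> hp hq xhb; have npq : p != q by apply: contraNneq hq => <-.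
have h10 := disj10 p q; have h01 := disj01 p q.
rewrite /tau hp (negbTE hq) /=.
case: k h10 h01 => h10 h01; case: b xhb => xhb; move: h10 h01;
  rewrite /P_10 /P1_01 /preimg /UxC hp (negbTE hq) npq xhb //= => _.
- by move=> _; apply/existsP; exists p; rewrite hp /cv eqxx (completion_val hx npq xhb) orbT.
- rewrite eqxx !andbT; apply: contraNF => /existsP [s /andP [sU /andP [yps xsq]]].
  have nsq : s != q by apply: contraNneq hq => <-.
  apply/existsP; exists s; rewrite sU yps.
  by apply: (completion_ne0 hx nsq); rewrite -(cv_neq x nsq).
Qed.

Lemma tau_CxU p q b : p \notin U -> q \in U -> xh p q = Some b ->
  tau k U y x p q = b.
Proof.
move=> hp hq xhb; have npq : p != q by apply: contraNneq hp => ->.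
have h10 := disj10 p q; have h01 := disj01 p q.
rewrite /tau hq (negbTE hp) /=.
case: k h10 h01 => h10 h01; case: b xhb => xhb; move: h10 h01;
  rewrite /P_10 /P1_01 /preimg /UxC /CxU hq (negbTE hp) npq xhb //= => _.
- by move=> _; apply/existsP; exists q; rewrite hq /cv eqxx (completion_val hx npq xhb) orbT.
- rewrite eqxx !andbT; apply: contraNF => /existsP [s /andP [sU /andP [xps ysq]]].
  have nps : p != s by apply: contraNneq hp => ->.
  apply/existsP; exists s; rewrite sU ysq andbT.
  by apply: (completion_ne0 hx nps); rewrite -(cv_neq x nps).
Qed.

End CrossPairs.

Theorem corollary7p4 (V : finType) (hV : (0 < #|V|)%N) (U : {set V})
  (xh : prel V) (hms : maximally_specific xh) (y : brel V)
  (hy : inXp U (restr U xh) y) (k : tau_kind) :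
  ((disj2 (P_10 k U xh) (preimg xh true) /\ disj2 (P1_01 k U xh y) (preimg xh false)) \/
   (disj2 (P_10 k U xh) (preimg xh true) /\ disj2 (P2_01 k U xh) (preimg xh false))) ->
  forall x : brel V, inXp [set: V] xh x -> inXp [set: V] xh (tau k U y x).
Proof.
move=> hdisj x hx; split; first exact: inX_tau hy.1 hx.1.
have [disj10 disj01] : disj2 (P_10 k U xh) (preimg xh true) /\
                       disj2 (P1_01 k U xh y) (preimg xh false).
  case: hdisj => [//|[disj10 disj2_01]]; split=> // p q.
  by apply: contraNN (disj2_01 p q) => /andP [/P1_01_sub_P2_01 -> ->].
move=> p q _ _ npq b xhb.
case: (boolP (p \in U)) => hp; case: (boolP (q \in U)) => hq.
- by rewrite /tau hp hq; apply: hy.2; rewrite ?/restr ?hp ?hq.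
- exact: (tau_UxC hx disj10 disj01 hp hq xhb).
- exact: (tau_CxU hx disj10 disj01 hp hq xhb).
- by rewrite /tau (negbTE hp) (negbTE hq) /=; apply: (completion_val hx npq xhb).
Qed.
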